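(* Let $d\ge 2$ and $n\ge 2$ be integers, let $k\ge0$ be such that $n_k\le n<n_{k+1}$, let $\lambda(n)=(l_{k+1},l_k,\ldots,l_0)$, and set $\lambda_i(n)=l_0+l_1d+\cdots+l_{i-1}d^{i-1}$ (so $\lambda_0(n)=0$). Then $$W(D_{n,d};q)=\sum_{i=0}^k d^i(n-n_i+1)q^{2i+1}+\sum_{i=0}^{k'}\left(d^{2i}\left\lfloor\frac{n-m_i}{d^{i+1}}\right\rfloor\binom{d+1}{2}+d^{2i}\binom{l_i+1}{2}+d^i(l_i+1)(\lambda_i(n)+1)\right)q^{2i+2},$$ where $k'=k-1$ if $n_k\le n<m_k$ and $k'=k$ if $m_k\le n<n_{k+1}$.
   Context: For a connected graph $G$, $W(G;q)=\sum_{\{u,v\}}q^{d(u,v)}$ over unordered pairs of distinct vertices, $d$ the graph distance. The $d$-ary dendrimer $D_{n,d}$ is the tree on vertex set $\{1,\ldots,n\}$ defined inductively: $D_{1,d}$ is the single vertex $1$, and $D_{n,d}$ is obtained from $D_{n-1,d}$ by attaching a new leaf $n$ to the smallest-numbered vertex of $D_{n-1,d}$ having degree $\le d$. Define $n_k=2+(d+1)\frac{d^k-1}{d-1}$ and $m_k=3+2d\frac{d^k-1}{d-1}$ for $k\ge0$. For a vertex $m$ with $n_k\le m<n_{k+1}$, its label is $\lambda(m)=(l_{k+1},l_k,\ldots,l_0)$ where $0\le l_i<d$ and $\sum_{i=0}^{k+1}l_id^i=m-n_k+(d-1)d^k$. *)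

From mathcomp Require Import all_boot all_algebra.
Set Implicit Arguments. Unset Strict Implicit. Unset Printing Implicit Defensive.
Import GRing.Theory.
Local Open Scope ring_scope.

(* Graphs on vertex set {1,...,n} given by an edge list of (unordered) pairs. *)
Definition deg (E : seq (nat * nat)) (v : nat) : nat :=
  count (fun e => (e.1 == v) || (e.2 == v)) E.

Definition nbrs (E : seq (nat * nat)) (u : nat) : seq nat :=
  [seq (if e.1 == u then e.2 else e.1) | e <- E & (e.1 == u) || (e.2 == u)].

Fixpoint dendrimer_edges (d m : nat) : seq (nat * nat) :=
  match m with
  | 0 => [::]
  | 1 => [::]
  | m'.+1 =>
      let E := dendrimer_edges d m' in
      let vs := iota 1 m' in
      let p := nth 0%N vs (find (fun v => (deg E v <= d)%N) vs) in
      rcons E (p, m)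
  end.

Fixpoint reach (E : seq (nat * nat)) (k u v : nat) : bool :=
  match k with
  | 0 => u == v
  | k'.+1 => (u == v) || has (fun w => reach E k' w v) (nbrs E u)
  end.

(* Graph distance in a connected graph on n vertices (always < n). *)
Definition dist (E : seq (nat * nat)) (n u v : nat) : nat :=
  find (fun k => reach E k u v) (iota 0 n).

Definition wiener_poly (E : seq (nat * nat)) (n : nat) : {poly int} :=
  \sum_(1 <= v < n.+1) \sum_(1 <= u < v) 'X^(dist E n u v).

Definition W_dendrimer (n d : nat) : {poly int} :=
  wiener_poly (dendrimer_edges d n) n.

Definition nk (d k : nat) : nat := (2 + (d + 1) * ((d ^ k - 1) %/ (d - 1)))%N.
Definition mk (d k : nat) : nat := (3 + 2 * d * ((d ^ k - 1) %/ (d - 1)))%N.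

(* For n_k <= m < n_{k+1}, the label digits l_i of m (base-d digits of
   m - n_k + (d-1) d^k). *)
Definition label_val (d k m : nat) : nat := (m - nk d k + (d - 1) * d ^ k)%N.
Definition label_digit (d k m i : nat) : nat := ((label_val d k m %/ d ^ i) %% d)%N.
Definition lambda_i (d k m i : nat) : nat :=
  (\sum_(j < i) label_digit d k m j * d ^ j)%N.

(* Vertex m >= 2 of D_{n,d} is attached to [parent m = (m - 3) %/ d + 1], so
   D_{n,d} is the set of the first n vertices of a single infinite tree, whose
   distance is computed by repeatedly replacing the larger endpoint by its
   parent.  Let R_v = sum_{u < v} q^d(u,v), so that W(D_{n,d}) = sum_{v <= n} R_v.
   If v - 1 and v are siblings then R_v = R_{v-1} + q^2, and for the first child
   v = d q + 3 of a vertex q + 1 >= 2 one finds R_v = q + q^2 + d q^2 R_{q+1}.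
   These recursions are solved by R_v = sum_i (a_i(v) q^(2i+1) + b_i(v) q^(2i+2))
   with a_i(v) = d^i for v >= n_i and b_i(v) = d^i (1 + ((v - m_i) %/ d^i) %% d)
   for v >= m_i.  Summing over v <= n yields the coefficients of the theorem:
   the base-d digits of n - m_i are the label digits l_i, and its residue
   modulo d^i is lambda_i(n). *)

From mathcomp Require Import all_boot all_algebra.
From mathcomp Require Import zify ring.
Import GRing.Theory.
Set Implicit Arguments. Unset Strict Implicit. Unset Printing Implicit Defensive.

Lemma find_iota (P : pred nat) a n j : j < n -> P (a + j) ->
  (forall i, i < j -> ~~ P (a + i)) -> find P (iota a n) = j.
Proof.
move=> ltjn Pj notP; rewrite -(subnKC (ltnW ltjn)) iotaD find_cat size_iota.
have -> : has P (iota a j) = false.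
  apply/negbTE/hasPn => x; rewrite mem_iota => /andP[ax xj].
  by rewrite -(subnKC ax); apply: notP; lia.
by case: (n - j) (ltjn) => [|m] /=; rewrite ?addn0 ?Pj //; lia.
Qed.

Lemma count_iota_range a n lo hi :
  count (fun c => lo <= c <= hi) (iota a n) = minn (a + n) hi.+1 - maxn a lo.
Proof.
elim: n => [|n IH]; first by rewrite /= addn0; lia.
by rewrite -addn1 iotaD count_cat IH /=; lia.
Qed.

Lemma modn_pred_dvd x e : e %| x.+1 -> x %% e = e.-1.
Proof.
have [->|e_neq1] := eqVneq e 1; first by rewrite modn1.
by move=> dvd_e; rewrite -[x]/(x.+1.-1) modn_pred // dvd_e.
Qed.

Lemma sum_nat_from (F : nat -> nat) a b c : a <= c ->
  \sum_(a <= v < b) (if c <= v then F v else 0) = \sum_(c <= v < b) F v.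
Proof.
move=> le_ac; have [le_cb|lt_bc] := leqP c b.
  rewrite (@big_cat_nat _ _ _ c a b _ _ le_ac le_cb) /= big_nat_cond big1 ?add0n.
    by apply: eq_big_nat => v /andP[-> _].
  by move=> v /andP[/andP[_ lt_vc] _]; rewrite leqNgt lt_vc.
rewrite [RHS]big_geq; last lia.
by rewrite big_nat_cond big1 // => v /andP[/andP[_ lt_vb] _]; rewrite ifF //; lia.
Qed.

Section Dendrimer.
Variable d : nat.
Hypothesis d_ge2 : 2 <= d.

(* Vertex 1 has the d+1 children 2..d+2 (truncated subtraction sends 2 to 1
   as well); every other vertex p has the d children dp-d+3..dp+2. *)
Definition parent (m : nat) : nat := ((m - 3) %/ d).+1.

Definition first_child (p : nat) : nat := if p == 1 then 2 else p * d + 3 - d.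

Lemma parent_lt m : 2 <= m -> 0 < parent m < m.
Proof. by move=> m_ge2; rewrite /parent /=; have := leq_div (m - 3) d; lia. Qed.

Lemma parent_eqE c p : 2 <= c -> 0 < p ->
  (parent c == p) = (first_child p <= c <= p * d + 2).
Proof.
move=> c_ge2 p_gt0; rewrite /parent /first_child.
have -> : (((c - 3) %/ d).+1 == p) = (p.-1 <= (c - 3) %/ d < p) by apply/eqP/andP; lia.
rewrite leq_divRL ?ltn_divLR; try lia.
have -> : p.-1 * d = p * d - d by rewrite -subn1 mulnBl mul1n.
case: eqP => [->|p_neq1]; first by rewrite mul1n; apply/andP/andP; lia.
have : 2 * d <= p * d by rewrite leq_mul2r; lia.
by move: (p * d) => pd pd_ge; apply/andP/andP; lia.
Qed.

Lemma parent2 : parent 2 = 1.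
Proof. by rewrite /parent /= div0n. Qed.

Lemma parent_first_child q : parent (d * q + 3) = q.+1.
Proof. by rewrite /parent addnK mulKn //; lia. Qed.

(* [v] is the first child [d q + 3] of a vertex [q + 1 >= 2]; the first
   child [2] of the root is treated separately. *)
Definition is_first_child (v : nat) : bool := (3 < v) && (d %| v - 3).

Lemma parent_pred v : 3 <= v -> ~~ is_first_child v -> parent v.-1 = parent v.
Proof.
move=> v_ge3; have [v_le3|v_gt3] := leqP v 3; first by rewrite (_ : v = 3) //; lia.
rewrite /is_first_child v_gt3 /= => not_dvd.
rewrite /parent [in RHS](_ : v - 3 = (v.-1 - 3).+1) ?divnS; try lia.
by rewrite (_ : (v.-1 - 3).+1 = v - 3) ?(negbTE not_dvd) //; lia.
Qed.

Fixpoint tdist_fuel (f u v : nat) : nat :=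
  if f is f.+1 then
    if u == v then 0
    else if v < u then (tdist_fuel f (parent u) v).+1
    else (tdist_fuel f u (parent v)).+1
  else 0.

(* Each recursive call lowers [u + v], so the fuel [u + v] suffices. *)
Definition tdist (u v : nat) : nat := tdist_fuel (u + v) u v.

Lemma tdist_fuel_irrel f g u v : 0 < u -> 0 < v ->
  u + v <= f -> u + v <= g -> tdist_fuel f u v = tdist_fuel g u v.
Proof.
elim: f g u v => [|f IH] [|g] u v u_gt0 v_gt0 uv_f uv_g /=; try lia.
case: eqP => // /eqP neq_uv; case: ifP => vu; congr S; apply: IH => //;
  by have := @parent_lt u; have := @parent_lt v; lia.
Qed.

Lemma tdistE u v : 0 < u -> 0 < v ->
  tdist u v = if u == v then 0
              else if v < u then (tdist (parent u) v).+1
              else (tdist u (parent v)).+1.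
Proof.
move=> u_gt0 v_gt0; rewrite {1}/tdist -[u + v]prednK ?[LHS]/=; last lia.
case: eqP => // /eqP neq_uv; case: ifP => vu; congr S; apply: tdist_fuel_irrel => //;
  by have := @parent_lt u; have := @parent_lt v; lia.
Qed.

Lemma tdistxx u : 0 < u -> tdist u u = 0.
Proof. by move=> u_gt0; rewrite tdistE // eqxx. Qed.

Lemma tdist_parent_l u v : 0 < v -> v < u -> tdist u v = (tdist (parent u) v).+1.
Proof.
move=> v_gt0 vu; rewrite tdistE ?vu //; last lia.
by have -> : (u == v) = false by apply/eqP; lia.
Qed.

Lemma tdist_parent_r u v : 0 < u -> u < v -> tdist u v = (tdist u (parent v)).+1.
Proof.
move=> u_gt0 uv; rewrite tdistE //; last lia.
have -> : (u == v) = false by apply/eqP; lia.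
by have -> : (v < u) = false by lia.
Qed.

Lemma tdist_parent u v : 2 <= u -> 0 < v ->
  tdist u v = (tdist (parent u) v).+1 \/ tdist (parent u) v = (tdist u v).+1.
Proof.
move=> u_ge2; elim/ltn_ind: v => v IH v_gt0.
have /andP[_ pu_lt] := parent_lt u_ge2.
case: (ltngtP u v) => [uv|vu|<-].
- have /andP[_ pv_lt] := @parent_lt v ltac:(lia).
  rewrite tdist_parent_r ?(@tdist_parent_r (parent u) v) //; try lia.
  by case: (IH (parent v) pv_lt isT) => ->; [left|right].
- by left; rewrite tdist_parent_l.
- by right; rewrite tdist_parent_r // !tdistxx //; lia.
Qed.

Lemma tdist_le_halves u v : 0 < u -> 0 < v -> tdist u v <= u./2 + v./2.
Proof.
have parent_half x : 2 <= x -> (parent x)./2 < x./2.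
  by move=> x_ge2; have := @leq_div2l (x - 3) 2 d isT d_ge2; rewrite /parent; lia.
move=> u_gt0 v_gt0; move: {2}(u + v) (leqnn (u + v)) => s.
elim: s u v u_gt0 v_gt0 => [|s IH] u v u_gt0 v_gt0 uv_s; first lia.
rewrite tdistE //; case: eqP => // /eqP neq_uv; case: ifP => vu.
  have := parent_half u; have := IH (parent u) v isT v_gt0.
  by have := @parent_lt u; lia.
have := parent_half v; have := IH u (parent v) u_gt0 isT.
by have := @parent_lt v; lia.
Qed.

Definition parent_edges (m : nat) : seq (nat * nat) := [seq (parent c, c) | c <- iota 2 m.-1].

Lemma deg_parent_edges m v : 0 < v ->
  deg (parent_edges m) v =
    (2 <= v <= m) + (minn (m + 1) (v * d + 3) - maxn 2 (first_child v)).
Proof.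
move=> v_gt0; rewrite /deg /parent_edges count_map.
have no_loop : count (predI (fun c => parent c == v) (pred1 v)) (iota 2 m.-1) = 0.
  apply/eqP; rewrite -leqn0 leqNgt -has_count; apply/hasPn => c.
  rewrite mem_iota => /andP[c_ge2 _]; apply/negP => /andP[/eqP <- /eqP].
  by have := parent_lt c_ge2; lia.
rewrite (@eq_count _ _ (predU (fun c => parent c == v) (pred1 v))) //.
have := count_predUI (fun c => parent c == v) (pred1 v) (iota 2 m.-1).
rewrite no_loop addn0 => ->; rewrite addnC; congr (_ + _).
  rewrite (count_uniq_mem _ (iota_uniq 2 m.-1)) mem_iota.
  by congr nat_of_bool; apply/idP/idP; lia.
rewrite (@eq_in_count _ _ (fun c => first_child v <= c <= v * d + 2)); last first.
  by move=> c; rewrite mem_iota => /andP[c_ge2 _] /=; rewrite parent_eqE.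
by rewrite count_iota_range; lia.
Qed.

Lemma deg_parent_edges_le m v : 0 < v <= m ->
  (deg (parent_edges m) v <= d) = (parent m.+1 <= v).
Proof.
move=> /andP[v_gt0 v_le]; rewrite deg_parent_edges //.
set P := parent m.+1; have P_gt0 : 0 < P by [].
have : first_child P <= m.+1 <= P * d + 2 by rewrite -parent_eqE //; lia.
have vd_ge : v != 1 -> 2 * d <= v * d by move=> ?; rewrite leq_mul2r; lia.
have Pd_ge : P != 1 -> 2 * d <= P * d by move=> ?; rewrite leq_mul2r; lia.
rewrite /first_child; have [->|v_neq1] := eqVneq v 1; have [P1|P_neq1] := eqVneq P 1.
- by rewrite P1 mul1n; lia.
- by have := Pd_ge P_neq1; rewrite mul1n; lia.
- by have := vd_ge v_neq1; rewrite P1; lia.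
have := vd_ge v_neq1; have := Pd_ge P_neq1.
have [vP|Pv|<-] := ltngtP v P.
- have : v.+1 * d <= P * d by rewrite leq_mul2r vP orbT.
  by rewrite mulSnr; move: (v * d) (P * d) => vd Pd; lia.
- have : P.+1 * d <= v * d by rewrite leq_mul2r Pv orbT.
  by rewrite mulSnr; move: (v * d) (P * d) => vd Pd; lia.
- by move: (v * d) => vd; lia.
Qed.

Lemma dendrimer_edgesE m : 0 < m -> dendrimer_edges d m = parent_edges m.
Proof.
elim: m => [//|m IH] m_gt0; case: m IH m_gt0 => [//|m] IH _.
have -> : dendrimer_edges d m.+2 = rcons (dendrimer_edges d m.+1)
    (nth 0 (iota 1 m.+1) (find (fun v => deg (dendrimer_edges d m.+1) v <= d) (iota 1 m.+1)),
     m.+2) by [].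
rewrite IH //; set P := parent m.+2.
have P_le : P <= m.+1 by have := @parent_lt m.+2; lia.
have -> : find (fun v => deg (parent_edges m.+1) v <= d) (iota 1 m.+1) = P.-1.
  apply: find_iota; first lia.
    by rewrite deg_parent_edges_le; lia.
  by move=> i ltiP; rewrite deg_parent_edges_le; lia.
rewrite nth_iota; last lia.
rewrite /parent_edges -cats1 (_ : m.+2.-1 = m.+1.-1 + 1); last by rewrite addn1.
by rewrite iotaD map_cat.
Qed.

Lemma parent_in_nbrs n u : 2 <= u <= n -> parent u \in nbrs (parent_edges n) u.
Proof.
move=> /andP[u_ge2 u_le]; apply/mapP; exists (parent u, u); last first.
  by have := parent_lt u_ge2; rewrite /=; case: eqP; lia.
by rewrite mem_filter /= eqxx orbT /=; apply/mapP; exists u; rewrite ?mem_iota //; lia.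
Qed.

Lemma child_in_nbrs n c : 2 <= c <= n -> c \in nbrs (parent_edges n) (parent c).
Proof.
move=> /andP[c_ge2 c_le]; apply/mapP; exists (parent c, c); last by rewrite /= eqxx.
by rewrite mem_filter /= eqxx /=; apply/mapP; exists c; rewrite ?mem_iota //; lia.
Qed.

Lemma nbrs_parent_edgesP n u w : w \in nbrs (parent_edges n) u ->
  0 < w /\ (2 <= w /\ parent w = u \/ 2 <= u /\ parent u = w).
Proof.
case/mapP => e; rewrite mem_filter => /andP[ue /mapP[c c_in e_def]] ->; subst e.
move: ue c_in; rewrite mem_iota /= => ue /andP[c_ge2 _].
case: (parent c =P u) ue => [<- _|_ /eqP <-]; last by split => //; right.
by split; [lia | left].
Qed.

Lemma reachS E k u v : reach E k.+1 u v = (u == v) || has (fun w => reach E k w v) (nbrs E u).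
Proof. by []. Qed.

Lemma reach_refl E k u : reach E k u u.
Proof. by case: k => [|k]; rewrite /= eqxx. Qed.

Lemma reach_rcons E k u w v : reach E k u w -> v \in nbrs E w -> reach E k.+1 u v.
Proof.
elim: k u => [|k IH] u.
  by move=> /eqP -> v_w; rewrite reachS; apply/orP; right; apply/hasP; exists v; rewrite //= eqxx.
rewrite reachS => /orP[/eqP -> v_w|/hasP[x x_u reach_xw] v_w].
  by rewrite reachS; apply/orP; right; apply/hasP; exists v => //; apply: reach_refl.
by rewrite reachS; apply/orP; right; apply/hasP; exists x => //; apply: IH reach_xw v_w.
Qed.

Lemma reach_parent_edges n k u v : 0 < u <= n -> 0 < v <= n ->
  tdist u v <= k -> reach (parent_edges n) k u v.
Proof.
elim: k u v => [|k IH] u v /andP[u_gt0 u_le] /andP[v_gt0 v_le].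
  by rewrite tdistE //; case: eqP => [->|_]; [rewrite /= eqxx | case: ifP].
rewrite tdistE //; case: eqP => [->|/eqP neq_uv]; first by rewrite reach_refl.
case: ifP => vu tdist_le.
  rewrite reachS; apply/orP; right; apply/hasP; exists (parent u).
    by apply: parent_in_nbrs; lia.
  by apply: IH => //; have := @parent_lt u; lia.
apply: (@reach_rcons _ _ _ (parent v)); last by apply: child_in_nbrs; lia.
by apply: IH => //; have := @parent_lt v; lia.
Qed.

Lemma tdist_le_reach n k u v : 0 < u -> 0 < v ->
  reach (parent_edges n) k u v -> tdist u v <= k.
Proof.
elim: k u => [|k IH] u u_gt0 v_gt0; first by move=> /= /eqP ->; rewrite tdistxx.
rewrite reachS => /orP[/eqP ->|/hasP[w /nbrs_parent_edgesP[w_gt0 uw] /IH]].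
  by rewrite tdistxx.
move=> /(_ w_gt0 v_gt0); case: uw => [[w_ge2 <-]|[u_ge2 <-]].
  by case: (tdist_parent w_ge2 v_gt0); lia.
by case: (tdist_parent u_ge2 v_gt0); lia.
Qed.

Lemma dist_parent_edges n u v : 0 < u -> u < v <= n ->
  dist (parent_edges n) n u v = tdist u v.
Proof.
move=> u_gt0 /andP[uv v_le]; apply: find_iota.
- by have := @tdist_le_halves u v u_gt0 ltac:(lia); lia.
- by apply: reach_parent_edges => //; lia.
- move=> i lti; apply/negP => /tdist_le_reach; rewrite add0n.
  by move/(_ u_gt0 ltac:(lia)); lia.
Qed.

Fixpoint repunit (k : nat) : nat := if k is k.+1 then d * repunit k + 1 else 0.

Lemma repunitE k : (d - 1) * repunit k = d ^ k - 1.
Proof.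
elim: k => [|k IH] /=; first by rewrite muln0 expn0.
have := expn_gt0 d k; rewrite expnS mulnDr muln1 mulnCA IH.
by move: (d ^ k) => x; nia.
Qed.

Lemma repunitD b a : repunit (b + a) = repunit b + d ^ b * repunit a.
Proof.
elim: a => [|a IH] /=; first by rewrite addn0 muln0 addn0.
rewrite addnS /= IH; have := repunitE b; have := expn_gt0 d b.
by move: (d ^ b) (repunit b) (repunit a) => x t u; nia.
Qed.

Lemma nkE k : nk d k = 2 + (d + 1) * repunit k.
Proof. by rewrite /nk -repunitE mulKn //; lia. Qed.

Lemma mkE k : mk d k = 3 + 2 * d * repunit k.
Proof. by rewrite /mk -repunitE mulKn //; lia. Qed.

Lemma mk_nk k : mk d k = nk d k + d ^ k.
Proof.
rewrite mkE nkE; have := repunitE k; have := expn_gt0 d k.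
by move: (d ^ k) (repunit k) => x t; nia.
Qed.

Lemma nkS_mk k : nk d k.+1 = mk d k + d ^ k.+1.
Proof.
rewrite mkE nkE /= expnS; have := repunitE k; have := expn_gt0 d k.
by move: (d ^ k) (repunit k) => x t; nia.
Qed.

(* [n_{k+1}] and [m_{k+1}] are the first children of [n_k] and [m_k]. *)
Lemma nkS k : nk d k.+1 = d * (nk d k).-1 + 3.
Proof. by rewrite !nkE /=; nia. Qed.

Lemma mkS k : mk d k.+1 = d * (mk d k).-1 + 3.
Proof. by rewrite !mkE /=; nia. Qed.

Lemma nk_ge k : k + 2 <= nk d k.
Proof.
rewrite nkE; suff : k <= repunit k by nia.
by elim: k => //= k IH; nia.
Qed.

Lemma mk_ge3 k : 3 <= mk d k.
Proof. by rewrite mkE; lia. Qed.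

Lemma nk0 : nk d 0 = 2.
Proof. by rewrite nkE muln0. Qed.

Lemma mk0 : mk d 0 = 3.
Proof. by rewrite mkE muln0. Qed.

Lemma nk_homo : {homo nk d : i j / i < j}.
Proof.
by apply: homo_ltn ltn_trans _ => k /=; rewrite (nkS_mk k) mk_nk; have := expn_gt0 d k.+1; lia.
Qed.

Lemma mk_homo : {homo mk d : i j / i < j}.
Proof.
by apply: homo_ltn ltn_trans _ => k /=; rewrite (mk_nk k.+1) nkS_mk; have := expn_gt0 d k.+1; lia.
Qed.

Lemma nk_mk_add i r : nk d (i.+1 + r) = mk d i + d ^ i.+1 * (1 + (d + 1) * repunit r).
Proof.
rewrite nkE mkE repunitD /=; have := repunitE i; have := expn_gt0 d i; rewrite expnS.
by move: (d ^ i) (repunit i) (repunit r) => x t u; nia.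
Qed.

Lemma modn_expS x i : x %% d ^ i.+1 = x %% d ^ i + (x %/ d ^ i %% d) * d ^ i.
Proof.
rewrite {1}(divn_eq (x %% d ^ i.+1) (d ^ i)) modn_divl -expnS.
by rewrite modn_dvdm ?dvdn_exp2l // addnC.
Qed.

Lemma sum_digits x i : \sum_(j < i) (x %/ d ^ j %% d) * d ^ j = x %% d ^ i.
Proof.
elim: i => [|i IH]; first by rewrite big_ord0 expn0 modn1.
by rewrite big_ord_recr /= IH modn_expS.
Qed.

Definition block_sum (e M : nat) : nat :=
  e * e * (M %/ (e * d)) * 'C(d + 1, 2) + e * e * 'C(M %/ e %% d + 1, 2)
  + e * (M %/ e %% d + 1) * (M %% e + 1).

Lemma block_sumS e M : 0 < e -> block_sum e M.+1 = block_sum e M + e * (1 + M.+1 %/ e %% d).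
Proof.
move=> e_gt0; have d_gt0 : 0 < d by lia.
have binS2 x : 'C(x.+1, 2) = 'C(x, 2) + x by rewrite binS bin1.
rewrite /block_sum !divnMA divnS // modnS.
have [e_dvd|_] := boolP (e %| M.+1); last by rewrite add0n; ring.
rewrite (modn_pred_dvd e_dvd) add1n divnS // modnS; set q := M %/ e.
have [d_dvd|_] := boolP (d %| q.+1); last by rewrite !addn1 prednK // !binS2 /=; ring.
by rewrite (modn_pred_dvd d_dvd) !addn1 !prednK // !binS2 bin0n /=; ring.
Qed.

Lemma sum_block e c M : 0 < e ->
  \sum_(c <= v < c + M.+1) e * (1 + (v - c) %/ e %% d) = block_sum e M.
Proof.
move=> e_gt0; elim: M => [|M IH].
  by rewrite addn1 big_nat1 subnn /block_sum !div0n !mod0n add0n (@bin_small 1 2) //; nia.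
by rewrite -addSnnS big_nat_recr ?leq_addr // IH block_sumS // addKn.
Qed.

Section Bracket.
Variables k n : nat.
Hypothesis n_in : nk d k <= n < nk d k.+1.

Lemma leq_nk i : (nk d i <= n) = (i <= k).
Proof.
case: (leqP i k) => [le_ik|lt_ki]; first by have := ltnW_homo nk_homo le_ik; lia.
by have := ltnW_homo nk_homo lt_ki; lia.
Qed.

Lemma leq_mk i : (mk d i <= n) = (i < if n < mk d k then k else k.+1).
Proof.
have [lt_ik|lt_ki|->] := ltngtP i k.
- have := ltnW_homo nk_homo lt_ik; rewrite nkS_mk.
  by case: ifP; lia.
- have := ltnW_homo mk_homo lt_ki; rewrite mk_nk.
  by case: ifP; lia.
- by case: ifP; lia.
Qed.

Lemma label_val_mod i : i < (if n < mk d k then k else k.+1) ->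
  label_val d k n %% d ^ i.+1 = (n - mk d i) %% d ^ i.+1.
Proof.
move=> i_lt; have /andP[n_ge _] := n_in; rewrite /label_val.
have [lt_ik|lt_ki|eq_ik] := ltngtP i k; last first.
- subst i; have mk_le : mk d k <= n by move: i_lt; case: ifP; lia.
  rewrite -(modnMDl 1 (n - mk d k)); congr (_ %% _).
  by move: mk_le; rewrite mk_nk expnS; have := expn_gt0 d k; move: (d ^ k) => x; nia.
- by move: i_lt; case: ifP; lia.
have [r k_eq] : exists r, k = i.+1 + r by exists (k - i.+1); lia.
move: n_ge; rewrite k_eq nk_mk_add expnD => n_ge.
rewrite -(modnMDl (1 + (d + 1) * repunit r)) -(modnMDl ((d - 1) * d ^ r) (n - _)).
congr (_ %% _); move: (d ^ i.+1) (1 + (d + 1) * repunit r) (d ^ r) n_ge => x y z n_ge.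
by rewrite mulnA [y * x]mulnC; lia.
Qed.

Lemma label_digitE i : i < (if n < mk d k then k else k.+1) ->
  label_digit d k n i = (n - mk d i) %/ d ^ i %% d /\
  lambda_i d k n i = (n - mk d i) %% d ^ i.
Proof.
move=> i_lt; have val_mod := label_val_mod i_lt; split.
  by rewrite /label_digit !modn_divl -expnS val_mod.
rewrite /lambda_i sum_digits.
by rewrite -(modn_dvdm _ (dvdn_exp2l d (leqnSn i))) val_mod modn_dvdm // dvdn_exp2l.
Qed.

Lemma block_sum_label i : i < (if n < mk d k then k else k.+1) ->
  block_sum (d ^ i) (n - mk d i) =
    d ^ (2 * i) * ((n - mk d i) %/ d ^ i.+1) * 'C(d + 1, 2)
  + d ^ (2 * i) * 'C(label_digit d k n i + 1, 2)
  + d ^ i * (label_digit d k n i + 1) * (lambda_i d k n i + 1).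
Proof.
by move=> /label_digitE[-> ->]; rewrite /block_sum -expnSr mul2n -addnn expnD.
Qed.

End Bracket.

Lemma leq_first_child_pred x v : 0 < x -> ~~ is_first_child v ->
  (d * x + 3 <= v) = (d * x + 3 <= v.-1).
Proof.
move=> x_gt0 not_first; have dx_gt0 : 0 < d * x by rewrite muln_gt0; lia.
suff : v != d * x + 3 by move: (d * x) dx_gt0 => y; lia.
apply: contraTneq not_first => ->.
by rewrite /is_first_child addnK dvdn_mulr // andbT; move: (d * x) dx_gt0 => y; lia.
Qed.

Lemma divn_first_child_pred x v e : ~~ (d %| v - 3) -> d * x + 3 <= v ->
  (v - (d * x + 3)) %/ (d * e) = (v.-1 - (d * x + 3)) %/ (d * e).
Proof.
move=> not_dvd le_v; have [->|e_gt0] := posnP e; first by rewrite muln0 !divn0.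
have de_gt0 : 0 < d * e by rewrite muln_gt0; lia.
have lt_v : d * x + 3 < v.
  by rewrite ltn_neqAle le_v andbT; apply: contraNneq not_dvd => <-; rewrite addnK dvdn_mulr.
have v_eq : v - (d * x + 3) = (v.-1 - (d * x + 3)).+1 by move: (d * x) lt_v => y; lia.
rewrite v_eq divnS //.
suff -> : (d * e %| (v.-1 - (d * x + 3)).+1) = false by [].
apply: contraNF not_dvd; rewrite -v_eq => /(dvdn_trans (dvdn_mulr e (dvdnn d))).
have -> : v - 3 = v - (d * x + 3) + d * x by move: (d * x) lt_v => y; lia.
by move=> dvd_d; rewrite dvdn_addr // dvdn_mulr.
Qed.

(* [odd_count i v] and [even_count i v] are the numbers of vertices [u < v]
   at distance [2i+1] and [2i+2] from [v]. *)
Definition odd_count (i v : nat) : nat := if nk d i <= v then d ^ i else 0.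

Definition even_count (i v : nat) : nat :=
  if mk d i <= v then d ^ i * (1 + (v - mk d i) %/ d ^ i %% d) else 0.

Local Open Scope ring_scope.

Lemma sum_ord_if (V : nmodType) n K (F : nat -> V) : (K <= n)%N ->
  \sum_(i < n) (if (i < K)%N then F i else 0) = \sum_(0 <= i < K) F i.
Proof. by move=> le_Kn; rewrite big_mkord (big_ord_widen _ F le_Kn) [RHS]big_mkcond. Qed.

Definition wiener_row (v : nat) : {poly int} := \sum_(1 <= u < v) 'X^(tdist u v).

Lemma W_dendrimerE n : (0 < n)%N -> W_dendrimer n d = \sum_(1 <= v < n.+1) wiener_row v.
Proof.
move=> n_gt0; rewrite /W_dendrimer /wiener_poly dendrimer_edgesE //.
by apply: eq_big_nat => v v_in; apply: eq_big_nat => u u_in; rewrite dist_parent_edges //; lia.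
Qed.

Lemma wiener_row_parent v : (2 <= v)%N ->
  wiener_row v = 'X * \sum_(1 <= u < v) 'X^(tdist u (parent v)).
Proof.
move=> v_ge2; rewrite /wiener_row big_distrr; apply: eq_big_nat => u u_in.
by rewrite tdist_parent_r ?exprS //; lia.
Qed.

Lemma wiener_row_sibling v : (3 <= v)%N -> parent v.-1 = parent v ->
  wiener_row v = wiener_row v.-1 + 'X^2.
Proof.
case: v => [//|v] v_ge3 /= same_parent.
have /andP[_ pv_lt] := @parent_lt v ltac:(lia).
rewrite !wiener_row_parent ?(big_nat_recr _ _ _ (_ : 1 <= v)%N) //=; try lia.
by rewrite -same_parent mulrDr tdist_parent_l // tdistxx.
Qed.

(* Moving [u] to its parent takes it one step farther from [p] unless [u] lies
   on the path from [p] to the root, where it comes one step closer. *)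
Definition root_path_term (u p : nat) : {poly int} :=
  if (tdist u p < tdist (parent u) p)%N then 'X^(tdist u p) - 'X^((tdist u p).+2) else 0.

Definition root_path_sum (p B : nat) : {poly int} := \sum_(2 <= u < B) root_path_term u p.

Lemma expX_tdist_parent u p : (2 <= u)%N -> (0 < p)%N ->
  'X^(tdist u p) = 'X * 'X^(tdist (parent u) p) + root_path_term u p.
Proof.
rewrite /root_path_term => u_ge2 p_gt0; case: (tdist_parent u_ge2 p_gt0) => ->.
  by rewrite ltnNge leqnSn addr0 exprS.
by rewrite ltnSn !exprS; ring.
Qed.

Lemma root_path_sum_root B : root_path_sum 1 B = 0.
Proof.
rewrite /root_path_sum big_nat_cond big1 // => u /andP[/andP[u_ge2 _] _].
by rewrite /root_path_term tdist_parent_l // ltnNge leqnSn.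
Qed.

Lemma root_path_sumE p B : (2 <= p < B)%N ->
  root_path_sum p B = 1 - 'X^2 + 'X * root_path_sum (parent p) B.
Proof.
move=> /andP[p_ge2 p_lt]; have /andP[pp_gt0 pp_lt] := parent_lt p_ge2.
have -> : 1 - 'X^2 = \sum_(2 <= u < B | u == p) (1 - 'X^2 : {poly int}).
  by rewrite big_nat1_eq p_ge2 p_lt.
rewrite /root_path_sum [X in _ = X + _]big_mkcond big_distrr -big_split /=.
apply: eq_big_nat => u /andP[u_ge2 _]; rewrite /root_path_term.
have /andP[pu_gt0 pu_lt] := parent_lt u_ge2.
case: (ltngtP u p) => [up|pu|->].
- rewrite (@tdist_parent_r u p) ?(@tdist_parent_r (parent u) p) ?ltnS //; try lia.
  by rewrite add0r; case: ifP => _; rewrite ?mulr0 // !exprS; ring.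
- rewrite !(@tdist_parent_l u) // ?ltnNge ?leqnSn ?mulr0 ?addr0 //; lia.
- rewrite (tdist_parent_r pp_gt0 pp_lt) (tdist_parent_l pp_gt0 pp_lt) !tdistxx ?eqxx; try lia.
  by rewrite /= mulr0 addr0.
Qed.

Lemma root_path_sum_closed p B : (0 < p < B)%N ->
  'X^(tdist 1 p) + 'X^((tdist 1 p).+1) + root_path_sum p B = 1 + 'X.
Proof.
elim/ltn_ind: p => p IH /andP[p_gt0 p_lt].
have [->|p_neq1] := eqVneq p 1%N; first by rewrite tdistxx // root_path_sum_root addr0.
have p_ge2 : (2 <= p)%N by lia.
have /andP[pp_gt0 pp_lt] := parent_lt p_ge2.
rewrite root_path_sumE ?p_ge2 // (@tdist_parent_r 1) //; try lia.
have := IH (parent p) pp_lt ltac:(lia).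
move: (tdist 1 (parent p)) (root_path_sum (parent p) B) => h Q IHp.
have -> : Q = 1 + 'X - 'X^h - 'X^(h.+1) by rewrite -IHp; ring.
by rewrite !exprS; ring.
Qed.

Lemma sum_parent_reindex (V : nmodType) (F : nat -> V) p :
  \sum_(2 <= u < d * p + 3) F (parent u) = F 1%N + (\sum_(1 <= w < p.+1) F w) *+ d.
Proof.
elim: p => [|p IH].
  by rewrite muln0 add0n big_nat1 big_geq // mul0rn addr0 parent2.
rewrite mulnS (@big_cat_nat _ _ _ (d * p + 3)) /=; try lia.
rewrite IH [in RHS]big_nat_recr //= mulrnDl addrA; congr (_ + _).
rewrite (@eq_big_nat _ _ _ _ _ _ (fun _ => F p.+1)); last first.
  move=> u /andP[lo hi]; congr F; rewrite /parent.
  have -> : (u - 3 = p * d + (u - 3 - d * p))%N by rewrite mulnC; lia.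
  by rewrite divnMDl ?divn_small //; lia.
by rewrite sumr_const_nat; congr (_ *+ _); lia.
Qed.

Lemma wiener_row_first_child q : (0 < q)%N ->
  wiener_row (d * q + 3) = 'X + 'X^2 + d%:R * 'X^2 * wiener_row q.+1.
Proof.
move=> q_gt0; have dq_ge : (2 * q <= d * q)%N by rewrite leq_mul2r; lia.
rewrite wiener_row_parent ?parent_first_child; last lia.
rewrite big_ltn; last lia.
have -> : \sum_(2 <= u < d * q + 3) 'X^(tdist u q.+1) =
    'X * \sum_(2 <= u < d * q + 3) 'X^(tdist (parent u) q.+1) + root_path_sum q.+1 (d * q + 3).
  rewrite big_distrr -big_split; apply: eq_big_nat => u u_in.
  by apply: expX_tdist_parent; lia.
rewrite (sum_parent_reindex (fun w => 'X^(tdist w q.+1))) -/(wiener_row q.+1).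
have := @root_path_sum_closed q.+1 (d * q + 3) ltac:(lia).
move: (tdist 1 q.+1) (root_path_sum _ _) (wiener_row q.+1) => h Q R closed.
have -> : Q = 1 + 'X - 'X^h - 'X^(h.+1) by rewrite -closed; ring.
by rewrite !exprS -mulr_natl; ring.
Qed.

Definition row_term (i v : nat) : {poly int} :=
  (odd_count i v)%:R * 'X^(2 * i + 1) + (even_count i v)%:R * 'X^(2 * i + 2).

Definition row_formula (N v : nat) : {poly int} := \sum_(i < N) row_term i v.

Lemma row_formula2 N : (0 < N)%N -> row_formula N 2 = 'X.
Proof.
case: N => // N _; rewrite /row_formula big_ord_recl big1 ?addr0.
  by rewrite /row_term /odd_count /even_count nk0 mk0 /= mul0r addr0 mul1r.
move=> i _; have := nk_ge i.+1; have := mk_ge3 i.+1.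
by rewrite /row_term /odd_count /even_count lift0 => ? ?; rewrite !ifF ?mul0r ?addr0 //; lia.
Qed.

Lemma row_term_sibling i v : (3 <= v)%N -> ~~ is_first_child v ->
  row_term i.+1 v = row_term i.+1 v.-1.
Proof.
move=> v_ge3 not_first; have := nk_ge i; have := mk_ge3 i => mk_ge nk_ge.
rewrite /row_term /odd_count /even_count nkS mkS.
rewrite -!(leq_first_child_pred _ not_first); try lia.
case: (leqP (d * (mk d i).-1 + 3) v) => mk_le //.
have dm_gt0 : (0 < d * (mk d i).-1)%N by rewrite muln_gt0; lia.
have [v_le3|v_gt3] := leqP v 3; first by move: mk_le dm_gt0; move: (d * _)%N => y; lia.
move: not_first; rewrite /is_first_child v_gt3 /= => not_dvd.
by rewrite expnS divn_first_child_pred.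
Qed.

Lemma row_term0_sibling v : (3 <= v)%N -> ~~ is_first_child v ->
  row_term 0 v = row_term 0 v.-1 + 'X^2.
Proof.
move=> v_ge3 not_first; rewrite /row_term /odd_count /even_count nk0 mk0 !expn0 !mul1n !divn1.
have -> : (2 <= v)%N by lia. have -> : (2 <= v.-1)%N by lia. have -> : (3 <= v)%N by [].
rewrite -addrA; congr (_ + _).
have [v_le3|v_gt3] := leqP v 3.
  by rewrite (_ : v = 3%N) /= ?mod0n ?addn0 ?mul1r ?mul0r ?add0r //; lia.
move: not_first; rewrite /is_first_child v_gt3 /=.
have -> : (3 <= v.-1)%N by lia.
have -> : (v - 3 = (v.-1 - 3).+1)%N by lia.
rewrite modnS => /negbTE ->.
by rewrite addnS mulrSr mulrDl mul1r.
Qed.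

Lemma row_formula_sibling N v : (0 < N)%N -> (3 <= v)%N -> ~~ is_first_child v ->
  row_formula N v = row_formula N v.-1 + 'X^2.
Proof.
case: N => // N _ v_ge3 not_first; rewrite /row_formula !big_ord_recl row_term0_sibling //.
rewrite -!addrA [_ + 'X^2]addrC; congr (_ + (_ + _)).
by congr (_ + _); apply: eq_bigr => i _; rewrite lift0 row_term_sibling.
Qed.

Lemma row_term_first_child i q : (0 < q)%N ->
  row_term i.+1 (d * q + 3) = d%:R * 'X^2 * row_term i q.+1.
Proof.
move=> q_gt0; have := nk_ge i; have := mk_ge3 i => mk_ge nk_ge.
rewrite /row_term /odd_count /even_count nkS mkS !leq_add2r !leq_mul2l.
have -> : (d * q + 3 - (d * (mk d i).-1 + 3) = d * (q.+1 - mk d i))%N.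
  by rewrite subnDr -mulnBr; congr (_ * _)%N; lia.
rewrite expnS divnMl; last lia.
have -> : (2 * i.+1 + 1 = 2 + (2 * i + 1))%N by lia.
have -> : (2 * i.+1 + 2 = 2 + (2 * i + 2))%N by lia.
rewrite !exprD (_ : (d == 0) = false); last by apply/eqP; lia.
have -> : ((nk d i).-1 <= q)%N = (nk d i <= q.+1)%N by lia.
have -> : ((mk d i).-1 <= q)%N = (mk d i <= q.+1)%N by lia.
by case: (nk d i <= q.+1)%N; case: (mk d i <= q.+1)%N; rewrite /= ?natrM; ring.
Qed.

Lemma row_formula_first_child N q : (0 < q)%N ->
  row_formula N.+1 (d * q + 3) = 'X + 'X^2 + d%:R * 'X^2 * row_formula N q.+1.
Proof.
move=> q_gt0; rewrite /row_formula big_ord_recl big_distrr /=; congr (_ + _).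
  rewrite /row_term /odd_count /even_count nk0 mk0 !expn0 !mul1n divn1 !ifT ?addnK; try lia.
  by rewrite modnMr addn0 !mul1r.
by apply: eq_bigr => i _; exact: row_term_first_child.
Qed.

Lemma wiener_row_formula N v : (2 <= v <= N)%N -> wiener_row v = row_formula N v.
Proof.
elim/ltn_ind: v N => v IH N /andP[v_ge2 v_le].
have [->|v_neq2] := eqVneq v 2%N.
  rewrite row_formula2; last lia.
  by rewrite /wiener_row big_nat1 tdist_parent_r // parent2 tdistxx.
have [/andP[v_gt3 /dvdnP[x v_eq]]|not_first] := boolP (is_first_child v); last first.
  have v_ge3 : (3 <= v)%N by lia.
  rewrite wiener_row_sibling ?parent_pred // row_formula_sibling //; last lia.
  by rewrite (IH v.-1 _ N) //; lia.
rewrite mulnC in v_eq; have dx_ge : (2 * x <= d * x)%N by rewrite leq_mul2r; lia.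
have x_gt0 : (0 < x)%N by case: x v_eq dx_ge => // ; rewrite muln0; lia.
have -> : v = (d * x + 3)%N by move: (d * x)%N v_eq => y; lia.
rewrite wiener_row_first_child // -(prednK (_ : 0 < N)%N); last lia.
rewrite row_formula_first_child // (IH x.+1 _ N.-1) //.
  by move: (d * x)%N v_eq dx_ge => y; lia.
by move: (d * x)%N v_eq dx_ge => y; lia.
Qed.

Lemma sum_row_term i n : \sum_(2 <= v < n.+1) row_term i v =
    ((if nk d i <= n then d ^ i * (n - nk d i + 1) else 0)%N)%:R * 'X^(2 * i + 1)
  + ((if mk d i <= n then block_sum (d ^ i) (n - mk d i) else 0)%N)%:R * 'X^(2 * i + 2).
Proof.
rewrite /row_term big_split /= -!big_distrl /= -!natr_sum /odd_count /even_count.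
have := nk_ge i; have := mk_ge3 i => mk_ge nk_ge.
rewrite !sum_nat_from ?sum_nat_const_nat; try lia.
congr (_%:R * _ + _%:R * _).
  case: (leqP (nk d i) n) => [le_n|lt_n]; first by rewrite mulnC; congr (_ * _)%N; lia.
  by rewrite (_ : n.+1 - nk d i = 0)%N ?mul0n //; lia.
case: (leqP (mk d i) n) => [le_n|lt_n]; last by rewrite big_geq.
by rewrite {1}(_ : n.+1 = mk d i + (n - mk d i).+1)%N ?sum_block ?expn_gt0 //; lia.
Qed.

Lemma W_dendrimer_levels n : (0 < n)%N -> W_dendrimer n d = \sum_(i < n)
   (((if nk d i <= n then d ^ i * (n - nk d i + 1) else 0)%N)%:R * 'X^(2 * i + 1)
  + ((if mk d i <= n then block_sum (d ^ i) (n - mk d i) else 0)%N)%:R * 'X^(2 * i + 2)).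
Proof.
move=> n_gt0; rewrite W_dendrimerE // big_ltn // (_ : wiener_row 1 = 0) ?add0r.
  rewrite (@eq_big_nat _ _ _ 2 n.+1 _ (row_formula n)); last by move=> v; apply: wiener_row_formula.
  by rewrite /row_formula exchange_big; apply: eq_bigr => i _; apply: sum_row_term.
by rewrite /wiener_row big_geq.
Qed.

End Dendrimer.

Local Open Scope ring_scope.

Theorem theorem2p2 (d n k : nat) (hd : (2 <= d)%N) (hn : (2 <= n)%N)
  (hk : (nk d k <= n < nk d k.+1)%N) :
  W_dendrimer n d =
    \sum_(0 <= i < k.+1) ((d ^ i * (n - nk d i + 1))%N)%:R *: 'X^(2 * i + 1)
  + \sum_(0 <= i < (if (n < mk d k)%N then k else k.+1))
      ((d ^ (2 * i) * ((n - mk d i) %/ d ^ i.+1) * 'C(d + 1, 2)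
        + d ^ (2 * i) * 'C(label_digit d k n i + 1, 2)
        + d ^ i * (label_digit d k n i + 1) * (lambda_i d k n i + 1))%N)%:R
        *: 'X^(2 * i + 2).
Proof.
have k_lt : (k < n)%N by have := nk_ge hd k; lia.
have K_le : ((if (n < mk d k)%N then k else k.+1) <= n)%N by case: ifP; lia.
rewrite (W_dendrimer_levels hd) 1?big_split /=; last lia.
rewrite -(sum_ord_if _ k_lt) -(sum_ord_if _ K_le).
congr (_ + _); apply: eq_bigr => i _.
  by rewrite (leq_nk hd hk) ltnS; case: ifP; rewrite ?mul0r // scaler_nat mulr_natl.
rewrite (leq_mk hd hk); case: ifP => i_lt; last by rewrite mul0r.
by rewrite (block_sum_label hd hk) // scaler_nat mulr_natl.
Qed.
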